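(* Let $\bm\mu=(\mu_1,\dots,\mu_r)$ be finite positive Borel measures on the unit circle with infinite supports, fix the square-root branch as in the context, let $\bm n\in\mathbb N^r$ be $\phi$-normal for $\bm\mu$, $\tau\in\partial\mathbb D$, and let $X\not\equiv0$ be a $\tau$-invariant paraorthogonal function for $\bm n$. If the polynomial $z^{(|\bm n|+1)/2}X(z)$ vanishes at two distinct points $e^{i\varphi_1}\neq e^{i\varphi_2}$ of $\partial\mathbb D$ ($\varphi_1,\varphi_2\in\mathbb R$), then $\bm n$ is not $\phi$-normal with respect to the system of real signed measures $\widehat{\bm\mu}$ given by $d\widehat\mu_j(e^{i\theta})=4\sin\frac{\theta-\varphi_1}{2}\sin\frac{\theta-\varphi_2}{2}\,d\mu_j(e^{i\theta})$, $\theta\in[t_0,t_0+2\pi)$, $j=1,\dots,r$.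
   Context: $\partial\mathbb D=\{|z|=1\}$. Fix $t_0\in\mathbb R$ and let $z^{k/2}=|z|^{k/2}\exp(ik\arg_{[t_0,t_0+2\pi)}(z)/2)$, $k\in\mathbb Z$. $|\bm n|=\sum_j n_j$; $\operatorname{span}\{z^p\}_{p=a}^b$ ($b-a\in\mathbb Z$) is the span of $z^a,\dots,z^b$. For a system $\bm\nu$ of (possibly signed) measures on $\partial\mathbb D$, $\bm n$ is $\phi$-normal w.r.t. $\bm\nu$ if there is a unique $\phi\in\operatorname{span}\{z^p\}_{p=-|\bm n|/2}^{|\bm n|/2}$ with coefficient of $z^{|\bm n|/2}$ equal to $1$ such that $\int\phi(z)z^{-p}\,d\nu_j(z)=0$ for $p=-n_j/2,\dots,n_j/2-1$, $j=1,\dots,r$. A $\tau$-invariant paraorthogonal function for $\bm n$ is any $X\in\operatorname{span}\{z^p\}_{p=-(|\bm n|+1)/2}^{(|\bm n|+1)/2}$ with $X(z)=\tau\overline{X(1/\bar z)}$ and $\int X(z)z^{-p}\,d\mu_j(z)=0$ for $p=-(n_j-1)/2,\dots,(n_j-1)/2$, $j=1,\dots,r$. *)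

From HB Require Import structures.
From mathcomp Require Import all_boot all_order all_algebra.
From mathcomp Require Import all_classical all_reals all_analysis.
From mathcomp Require Import complex.

Set Implicit Arguments.
Unset Strict Implicit.
Unset Printing Implicit Defensive.

Import Order.TTheory GRing.Theory Num.Theory.
Local Open Scope classical_set_scope.
Local Open Scope ring_scope.
Local Open Scope complex_scope.

Section Defs.
Variable R : realType.
Local Notation C := R[i].
Local Notation normc := (@ComplexField.Normc.normc R).

Definition expi (t : R) : C := cos t +i* sin t.

Definition circ_arc (t0 : R) : set R := `[t0, t0 + 2 * pi[%classic.

Definition argt (t0 : R) (z : C) : R :=
  xget t0 [set t | circ_arc t0 t /\ z = (normc z)%:C * expi t].

Definition zhalf (t0 : R) (k : int) (z : C) : C :=
  ((normc z) `^ (k%:~R / 2))%:C * expi (k%:~R * argt t0 z / 2).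

(* An element of span{z^p}_{p=-N/2}^{N/2} with coefficient vector c:
   sum_{m=0}^{N} c_m z^{m - N/2}  (c_N is the coefficient of z^{N/2}). *)
Definition hpoly (t0 : R) (N : nat) (c : {ffun 'I_N.+1 -> C}) (z : C) : C :=
  \sum_(m < N.+1) c m * zhalf t0 (2 * (m : nat)%:Z - N%:Z) z.

(* Complex-valued integral over the circle (parametrized by theta in
   [t0, t0+2pi)) of g against the (signed) measure w(theta) dmu(theta). *)
Definition cint_w (t0 : R) (mu : {measure set R -> \bar R}) (w : R -> R)
  (g : R -> C) : C :=
  (Rintegral mu (circ_arc t0) (fun t => w t * complex.Re (g t)))
  +i* (Rintegral mu (circ_arc t0) (fun t => w t * complex.Im (g t))).

Definition nsize (r : nat) (n : 'I_r -> nat) : nat := (\sum_(j < r) n j)%N.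

(* n is phi-normal w.r.t. the system of signed measures
   d nu_j = w(theta) d mu_j(theta):  there is a unique phi in
   span{z^p}_{p=-|n|/2}^{|n|/2} with coefficient of z^{|n|/2} equal to 1 and
   int phi(z) z^{-p} d nu_j(z) = 0 for p = -n_j/2, ..., n_j/2 - 1
   (i.e. p = l - n_j/2, l = 0..n_j-1, so -p = (n_j - 2 l)/2). *)
Definition phi_normal_cond (t0 : R) (r : nat) (mu : 'I_r -> {measure set R -> \bar R})
  (w : R -> R) (n : 'I_r -> nat) (c : {ffun 'I_(nsize n).+1 -> C}) : Prop :=
  c ord_max = 1 /\
  forall (j : 'I_r) (l : nat), (l < n j)%N ->
    cint_w t0 (mu j) w
      (fun t => hpoly t0 c (expi t) * zhalf t0 ((n j)%:Z - 2 * l%:Z) (expi t)) = 0.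

Arguments phi_normal_cond t0 [r] mu w n c.

Definition phi_normal (t0 : R) (r : nat) (mu : 'I_r -> {measure set R -> \bar R})
  (w : R -> R) (n : 'I_r -> nat) : Prop :=
  exists c, phi_normal_cond t0 mu w n c /\
    forall c', phi_normal_cond t0 mu w n c' -> c' = c.

(* X = hpoly t0 (|n|+1) d is a tau-invariant paraorthogonal function for n:
   X(z) = tau * conj(X(1/conj z)) for z <> 0, and
   int X(z) z^{-p} d mu_j(z) = 0 for p = -(n_j-1)/2, ..., (n_j-1)/2
   (p = l - (n_j-1)/2, l = 0..n_j-1, so -p = (n_j - 1 - 2 l)/2). *)
Definition paraorthogonal (t0 : R) (r : nat) (mu : 'I_r -> {measure set R -> \bar R})
  (n : 'I_r -> nat) (tau : C) (d : {ffun 'I_(nsize n).+2 -> C}) : Prop :=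
  (forall z : C, z != 0 ->
     hpoly t0 d z = tau * conjc (hpoly t0 d (conjc z)^-1)) /\
  forall (j : 'I_r) (l : nat), (l < n j)%N ->
    cint_w t0 (mu j) (fun _ => 1)
      (fun t => hpoly t0 d (expi t) * zhalf t0 ((n j)%:Z - 1 - 2 * l%:Z) (expi t)) = 0.

Arguments paraorthogonal t0 [r] mu n tau d.

Definition circ_support (t0 : R) (mu : {measure set R -> \bar R}) : set R :=
  [set t | circ_arc t0 t /\ forall e : R, 0 < e ->
     (0 < mu [set x | circ_arc t0 x /\ (normc (expi x - expi t) < e)%R])%E].

Definition hat_weight (phi1 phi2 : R) (t : R) : R :=
  4 * sin ((t - phi1) / 2) * sin ((t - phi2) / 2).

End Defs.

Arguments phi_normal_cond [R] t0 [r] mu w n c.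
Arguments paraorthogonal [R] t0 [r] mu n tau d.

(* Let N = |n| and P(z) = z^{(N+1)/2} X(z), the ordinary polynomial of degree at
   most N + 1 carrying the coefficients of X.  It vanishes at e^{i phi1} <> e^{i phi2},
   so P = (z - e^{i phi1}) (z - e^{i phi2}) Q with deg Q <= N - 1.  On the circle
   (e^{it} - e^{i phi1}) (e^{it} - e^{i phi2}) = - w(t) e^{it} e^{i (phi1 + phi2)/2},
   w being the density of mu-hat with respect to mu, hence z^{-1/2} X(z) = w(t) psi(z)
   with psi(z) = - e^{i (phi1 + phi2)/2} z^{-N/2} Q(z), an element of
   span{z^p}_{p=-N/2}^{N/2} whose coefficient of z^{N/2} vanishes.  The
   paraorthogonality relations of X for mu thus become the homogeneous phi-normality
   relations of psi for mu-hat; adding psi to the phi of mu-hat gives another solution,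
   so normality forces psi = 0, i.e. Q = 0 and X = 0. *)

From mathcomp Require Import all_boot all_order all_algebra.
From mathcomp Require Import all_classical all_reals all_analysis.
From mathcomp Require Import complex.
From mathcomp Require Import measurable_realfun.
From mathcomp Require Import ring lra zify.

Set Implicit Arguments.
Unset Strict Implicit.
Unset Printing Implicit Defensive.

Import Order.TTheory GRing.Theory Num.Theory.
Import numFieldNormedType.Exports.
Local Open Scope classical_set_scope.
Local Open Scope ring_scope.
Local Open Scope complex_scope.

Section CoefficientPolynomial.
Variable F : nzRingType.

Definition ffun_poly (K : nat) (c : {ffun 'I_K.+1 -> F}) : {poly F} :=
  \poly_(i < K.+1) c (inord i).

Definition poly_ffun (K : nat) (p : {poly F}) : {ffun 'I_K -> F} :=
  [ffun m : 'I_K => p`_m].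

Lemma coef_ffun_poly (K : nat) (c : {ffun 'I_K.+1 -> F}) (m : 'I_K.+1) :
  (ffun_poly c)`_m = c m.
Proof. by rewrite coef_poly ltn_ord inord_val. Qed.

Lemma ffun_poly_eq0 (K : nat) (c : {ffun 'I_K.+1 -> F}) : ffun_poly c = 0 -> c = 0.
Proof. by move=> c0; apply/ffunP => m; rewrite -coef_ffun_poly c0 coef0 ffunE. Qed.

Lemma poly_ffunK (K : nat) (p : {poly F}) :
  (size p <= K.+1)%N -> ffun_poly (poly_ffun K.+1 p) = p.
Proof.
move=> size_p; apply/polyP => i; rewrite coef_poly.
case: ltnP => [i_lt|i_ge]; first by rewrite ffunE inordK.
by rewrite nth_default // (leq_trans size_p).
Qed.

Lemma poly_ffun_eq0 (K : nat) (p : {poly F}) :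
  (size p <= K.+1)%N -> poly_ffun K.+1 p = 0 -> p = 0.
Proof.
move=> size_p p0; apply/polyP => i.
by rewrite -(poly_ffunK size_p) p0 coef_poly coef0; case: ifP; rewrite ?ffunE.
Qed.

End CoefficientPolynomial.

Lemma factor_two_roots (F : fieldType) (p : {poly F}) (a b : F) :
  a != b -> root p a -> root p b ->
  exists q, p = q * (('X - a%:P) * ('X - b%:P)).
Proof.
move=> neq_ab pa pb; apply/dvdpP.
have := @uniq_roots_dvdp _ p [:: a; b]; rewrite big_cons big_seq1; apply.
  by rewrite /= pa pb.
by rewrite uniq_rootsE /= inE neq_ab.
Qed.

Lemma size_mul_XsubC2 (F : idomainType) (q : {poly F}) (a b : F) :
  q != 0 -> size (q * (('X - a%:P) * ('X - b%:P))) = (size q).+2.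
Proof.
move=> q_neq0; rewrite size_mul ?mulf_neq0 ?polyXsubC_eq0 //.
by rewrite size_mul ?polyXsubC_eq0 // !size_XsubC addn3.
Qed.

Section ComplexParts.
Variable R : rcfType.
Local Notation C := R[i].

Lemma ReD (x y : C) : complex.Re (x + y) = complex.Re x + complex.Re y.
Proof. by move: x y => [? ?] [? ?]. Qed.

Lemma ImD (x y : C) : complex.Im (x + y) = complex.Im x + complex.Im y.
Proof. by move: x y => [? ?] [? ?]. Qed.

Lemma Re_sum (I : Type) (s : seq I) (F : I -> C) :
  complex.Re (\sum_(i <- s) F i) = \sum_(i <- s) complex.Re (F i).
Proof. by elim/big_rec2: _ => // i x y _ <-; rewrite ReD. Qed.

Lemma Re_real_mul (x : R) (z : C) : complex.Re (x%:C * z) = x * complex.Re z.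
Proof. by case: z => a b /=; ring. Qed.

Lemma Im_real_mul (x : R) (z : C) : complex.Im (x%:C * z) = x * complex.Im z.
Proof. by case: z => a b /=; ring. Qed.

Lemma Im_Re_mulNi (z : C) : complex.Im z = complex.Re (- 'i * z).
Proof. by case: z => a b /=; ring. Qed.

End ComplexParts.

Lemma bounded_in_le (T : Type) (R : realType) (A : set T) (f : T -> R) (M : R) :
  (forall x, A x -> `|f x| <= M) -> [bounded f x | x in A].
Proof.
move=> fM; rewrite /bounded_near; near=> M' => x Ax.
apply: le_trans (fM x Ax) _; near: M'; exact: nbhs_pinfty_ge (num_real M).
Unshelve. all: by end_near.
Qed.


Section Expi.
Variable R : realType.
Local Notation normc := (@ComplexField.Normc.normc R).

Lemma expi0 : expi 0 = 1 :> R[i].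
Proof. by rewrite /expi cos0 sin0. Qed.

Lemma expiD (a b : R) : expi (a + b) = expi a * expi b.
Proof.
rewrite /expi cosD sinD; apply/eqP; rewrite eq_complex /=.
by apply/andP; split; apply/eqP; ring.
Qed.

Lemma normc_expi (a : R) : normc (expi a) = 1.
Proof. by rewrite /expi /= cos2Dsin2 sqrtr1. Qed.

Lemma expi_neq0 (a : R) : expi a != 0.
Proof.
apply/eqP => ea0; have := normc_expi a.
by rewrite ea0 ComplexField.Normc.normc0 => /eqP; rewrite eq_sym oner_eq0.
Qed.

Lemma expi_unit (a : R) : expi a \is a GRing.unit.
Proof. by rewrite unitfE expi_neq0. Qed.

Lemma expiN (a : R) : expi (- a) = (expi a)^-1.
Proof.
apply: (mulfI (expi_neq0 a)).
by rewrite -expiD subrr expi0 mulfV ?expi_neq0.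
Qed.

Lemma expiMn (k : nat) (a : R) : expi (k%:R * a) = expi a ^+ k.
Proof.
elim: k => [|k IHk]; first by rewrite mul0r expi0 expr0.
by rewrite -addn1 natrD mulrDl mul1r expiD IHk exprD expr1.
Qed.

Lemma expiMz (k : int) (a : R) : expi (k%:~R * a) = expi a ^ k.
Proof.
case: k => k; first by rewrite -pmulrn expiMn.
by rewrite NegzE mulrNz mulNr expiN -pmulrn expiMn.
Qed.

Lemma expi_half_sqr (a : R) : expi (a / 2) ^+ 2 = expi a.
Proof. by rewrite -expiMn mulrC divfK ?pnatr_eq0. Qed.

Lemma expi_periodic (k : int) (a : R) : expi (a + k%:~R * (2 * pi)) = expi a.
Proof.
have expi2pi : expi (2 * pi) = 1 :> R[i] by rewrite /expi mulr_natl cos2pi sin2pi.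
by rewrite expiD expiMz expi2pi exp1rz mulr1.
Qed.

Lemma subr_expi (a b : R) :
  expi a - expi b = expi ((a + b) / 2) * (0 +i* (2 * sin ((a - b) / 2))).
Proof.
have ea : a = (a + b) / 2 + (a - b) / 2 by lra.
have eb : b = (a + b) / 2 + - ((a - b) / 2) by lra.
rewrite {1}eb {1}ea !expiD -mulrBr /expi cosN sinN; congr (_ * _).
by apply/eqP; rewrite eq_complex /=; apply/andP; split; apply/eqP; ring.
Qed.

Lemma expi_inj_arc (t0 s t : R) :
  circ_arc t0 s -> circ_arc t0 t -> expi s = expi t -> s = t.
Proof.
rewrite /circ_arc /= !in_itv /= => /andP[s_ge s_lt] /andP[t_ge t_lt] est.
have : expi (s - t) = 1 by rewrite expiD expiN est mulfV ?expi_neq0.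
move/eqP; rewrite eq_complex /= => /andP[/eqP cos1 _].
set v := (s - t) / 2.
have sin_v0 : sin v = 0.
  have : sin v ^+ 2 = 0.
    have := cos2Dsin2 v; rewrite -cos1 [s - t]splitr cosD -/v; nra.
  by move/eqP; rewrite expf_eq0 /= => /eqP.
have v_lt : v < pi by rewrite /v; lra.
have v_gt : - pi < v by rewrite /v; lra.
case: (ltgtP v 0) => [v_neg|v_pos|v0]; last by move: v0; rewrite /v; lra.
- have : 0 < sin (- v) by apply: sin_gt0_pi; apply/andP; split; lra.
  by rewrite sinN sin_v0 oppr0 ltxx.
- have : 0 < sin v by apply: sin_gt0_pi; apply/andP; split; lra.
  by rewrite sin_v0 ltxx.
Qed.

Lemma expi_arc_exists (t0 a : R) : exists2 s, circ_arc t0 s & expi s = expi a.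
Proof.
have pi2_gt0 : 0 < 2 * pi :> R by rewrite mulr_gt0 // pi_gt0.
set y := (a - t0) / (2 * pi).
exists (a + (- Num.floor y)%:~R * (2 * pi)); last exact: expi_periodic.
have := floor_itv y; rewrite intrD => /andP[fl_le fl_gt].
have : (Num.floor y)%:~R * (2 * pi) <= a - t0 by rewrite -ler_pdivlMr.
have : a - t0 < ((Num.floor y)%:~R + 1) * (2 * pi) by rewrite -ltr_pdivrMr.
rewrite /circ_arc /= in_itv /= mulrNz mulNr mulrDl mul1r.
by move=> ? ?; apply/andP; split; lra.
Qed.

Lemma argt_spec (t0 a : R) :
  circ_arc t0 (argt t0 (expi a)) /\ expi (argt t0 (expi a)) = expi a.
Proof.
rewrite /argt normc_expi; set P := [set _ | _].
have [s arc_s es] := expi_arc_exists t0 a.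
have [] : P (xget t0 P) by apply: xgetPex; exists s; rewrite /P /= mul1r.
by rewrite mul1r.
Qed.

Lemma argt_expi_arc (t0 t : R) : circ_arc t0 t -> argt t0 (expi t) = t.
Proof.
move=> arc_t; have [arc_arg e] := argt_spec t0 t.
exact: expi_inj_arc arc_arg arc_t e.
Qed.

End Expi.

Section HalfPowers.
Variables (R : realType) (t0 : R).
Local Notation C := R[i].
Local Notation normc := (@ComplexField.Normc.normc R).

Lemma zhalf_unit (k : int) (z : C) :
  normc z = 1 -> zhalf t0 k z = expi (argt t0 z / 2) ^ k.
Proof. by move=> z1; rewrite /zhalf z1 powR1 mul1r -mulrA expiMz. Qed.

Lemma zhalf_expi_arc (k : int) (t : R) :
  circ_arc t0 t -> zhalf t0 k (expi t) = expi (t / 2) ^ k.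
Proof. by move=> arc_t; rewrite zhalf_unit ?normc_expi ?argt_expi_arc. Qed.

Lemma sqr_expi_half_argt (a : R) : expi (argt t0 (expi a) / 2) ^+ 2 = expi a.
Proof. by rewrite expi_half_sqr; case: (argt_spec t0 a). Qed.

Lemma hpolyD (K : nat) (c c' : {ffun 'I_K.+1 -> C}) (z : C) :
  hpoly t0 (c + c') z = hpoly t0 c z + hpoly t0 c' z.
Proof. by rewrite /hpoly -big_split; apply: eq_bigr => m _; rewrite ffunE mulrDl. Qed.

Lemma hpoly0 (K : nat) (z : C) : hpoly t0 (0 : {ffun 'I_K.+1 -> C}) z = 0.
Proof. by rewrite /hpoly big1 // => m _; rewrite ffunE mul0r. Qed.

Lemma hpoly_unit (K : nat) (c : {ffun 'I_K.+1 -> C}) (z : C) : normc z = 1 ->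
  hpoly t0 c z =
  expi (argt t0 z / 2) ^ (- K%:Z) * (ffun_poly c).[expi (argt t0 z / 2) ^+ 2].
Proof.
move=> z1; rewrite /hpoly horner_poly mulr_sumr; apply: eq_bigr => m _.
have -> : 2 * (m : nat)%:Z - K%:Z = (2 * m)%N%:Z + (- K%:Z) by rewrite PoszM.
rewrite inord_val zhalf_unit // exprzDr ?expi_unit // -exprM [RHS]mulrCA.
by congr (_ * _); apply: mulrC.
Qed.

Lemma zhalf_hpoly_expi (K : nat) (d : {ffun 'I_K.+2 -> C}) (a : R) :
  zhalf t0 K.+1%:Z (expi a) * hpoly t0 d (expi a) = (ffun_poly d).[expi a].
Proof.
rewrite zhalf_unit ?normc_expi // hpoly_unit ?normc_expi // sqr_expi_half_argt.
by rewrite mulrA -exprzDr ?expi_unit // subrr expr0z mul1r.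
Qed.

Lemma hpoly_zhalf_arc (K : nat) (c : {ffun 'I_K.+1 -> C}) (k : int) (t : R) :
  circ_arc t0 t ->
  hpoly t0 c (expi t) * zhalf t0 k (expi t) =
  expi (t / 2) ^ (k - K%:Z) * (ffun_poly c).[expi t].
Proof.
move=> arc_t; rewrite zhalf_expi_arc // hpoly_unit ?normc_expi // argt_expi_arc //.
by rewrite expi_half_sqr mulrAC -exprzDr ?expi_unit // addrC.
Qed.

Lemma hpoly_zhalf_arc_sum (K : nat) (c : {ffun 'I_K.+1 -> C}) (k : int) (t : R) :
  circ_arc t0 t ->
  hpoly t0 c (expi t) * zhalf t0 k (expi t) =
  \sum_(m < K.+1) c m * expi ((2 * (m : nat)%:Z - K%:Z + k)%:~R / 2 * t).
Proof.
move=> arc_t; rewrite /hpoly mulr_suml; apply: eq_bigr => m _.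
rewrite !zhalf_expi_arc // [_%:~R / 2 * t]mulrAC -[_%:~R * t / 2]mulrA expiMz.
by rewrite -mulrA -exprzDr ?expi_unit.
Qed.
End HalfPowers.

Section CircleIntegrals.
Variables (R : realType) (t0 : R).
Local Notation C := R[i].

Lemma Re_mul_expi (z : C) (a : R) :
  complex.Re (z * expi a) = complex.Re z * cos a - complex.Im z * sin a.
Proof. by case: z. Qed.

Variables (mu : {finite_measure set R -> \bar R}) (w : R -> R) (B : R).
Hypotheses (w_meas : measurable_fun setT w) (w_bounded : forall t, `|w t| <= B).

Lemma integrable_Re_expi_sum (D : set R) (K : nat) (c : 'I_K -> C) (al : 'I_K -> R) :
  measurable D ->
  mu.-integrable D
    (EFin \o (fun t => w t * complex.Re (\sum_(m < K) c m * expi (al m * t)))).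
Proof.
move=> mD; have -> : (fun t => w t * complex.Re (\sum_(m < K) c m * expi (al m * t))) =
    (fun t => w t * \sum_(m < K)
       (complex.Re (c m) * cos (al m * t) - complex.Im (c m) * sin (al m * t))).
  by apply: funext => t; rewrite Re_sum; under eq_bigr do rewrite Re_mul_expi.
have trig_meas (f : R -> R) (a : R) :
    continuous f -> measurable_fun setT (fun t => f (a * t)).
  move=> f_cont; apply: (measurableT_comp (continuous_measurable_fun f_cont)).
  exact: measurable_funM.
apply: measurable_bounded_integrable => //.
- by rewrite ltey_eq fin_num_measure.
- apply: measurable_funTS; apply: measurable_funM => //.
  apply: measurable_sum => m; apply: measurable_funB; apply: measurable_funM => //.
    by apply: trig_meas; exact: continuous_cos.
  by apply: trig_meas; exact: continuous_sin.
- apply: (bounded_in_le (M := B * \sum_(m < K) (`|complex.Re (c m)| + `|complex.Im (c m)|))).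
  move=> t _.
  rewrite normrM; apply: ler_pM => //; apply: le_trans (ler_norm_sum _ _ _) _.
  apply: ler_sum => m _; apply: le_trans (ler_normB _ _) _.
  apply: lerD; rewrite normrM ler_piMr //.
    by rewrite ler_norml cos_le1 cos_geN1.
  by rewrite ler_norml sin_le1 sin_geN1.
Qed.


Lemma integrable_Re_hpoly_zhalf (K : nat) (c : {ffun 'I_K.+1 -> C}) (k : int) :
  mu.-integrable (circ_arc t0)
    (EFin \o (fun t => w t * complex.Re (hpoly t0 c (expi t) * zhalf t0 k (expi t)))).
Proof.
apply: eq_integrable (integrable_Re_expi_sum _ _ (measurable_itv _));
  first exact: measurable_itv.
by move=> t; rewrite inE => arc_t /=; rewrite hpoly_zhalf_arc_sum.
Qed.

Lemma integrable_Im_hpoly_zhalf (K : nat) (c : {ffun 'I_K.+1 -> C}) (k : int) :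
  mu.-integrable (circ_arc t0)
    (EFin \o (fun t => w t * complex.Im (hpoly t0 c (expi t) * zhalf t0 k (expi t)))).
Proof.
apply: eq_integrable (integrable_Re_expi_sum (fun m => - 'i * c m) _ (measurable_itv _));
  first exact: measurable_itv.
move=> t; rewrite inE => arc_t /=.
rewrite hpoly_zhalf_arc_sum // Im_Re_mulNi mulr_sumr.
by congr (_ * complex.Re _)%:E; apply: eq_bigr => m _; rewrite mulrA.
Qed.

Lemma cint_w_hpolyD (K : nat) (c c' : {ffun 'I_K.+1 -> C}) (k : int) :
  cint_w t0 mu w (fun t => hpoly t0 (c + c') (expi t) * zhalf t0 k (expi t)) =
  cint_w t0 mu w (fun t => hpoly t0 c (expi t) * zhalf t0 k (expi t)) +
  cint_w t0 mu w (fun t => hpoly t0 c' (expi t) * zhalf t0 k (expi t)).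
Proof.
rewrite /cint_w; apply/eqP; rewrite eq_complex /=; apply/andP; split; apply/eqP.
- rewrite -RintegralD ?integrable_Re_hpoly_zhalf //; last exact: measurable_itv.
  by apply: eq_Rintegral => t _; rewrite hpolyD mulrDl ReD mulrDr.
- rewrite -RintegralD ?integrable_Im_hpoly_zhalf //; last exact: measurable_itv.
  by apply: eq_Rintegral => t _; rewrite hpolyD mulrDl ImD mulrDr.
Qed.

End CircleIntegrals.

Lemma cint_w_weight (R : realType) (t0 : R) (mu : {measure set R -> \bar R})
    (w : R -> R) (f g : R -> R[i]) :
  (forall t, circ_arc t0 t -> f t = (w t)%:C * g t) ->
  cint_w t0 mu (fun _ => 1) f = cint_w t0 mu w g.
Proof.
move=> fg; rewrite /cint_w; congr (_ +i* _); apply: eq_Rintegral => t;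
  by rewrite inE => arc_t; rewrite mul1r fg // ?Re_real_mul ?Im_real_mul.
Qed.

Lemma phi_normal_kernel (R : realType) (t0 : R) (r : nat)
    (mu : 'I_r -> {finite_measure set R -> \bar R}) (w : R -> R) (B : R)
    (n : 'I_r -> nat) (psi : {ffun 'I_(nsize n).+1 -> R[i]}) :
  measurable_fun setT w -> (forall t, `|w t| <= B) ->
  phi_normal t0 mu w n -> psi ord_max = 0 ->
  (forall j l, (l < n j)%N ->
    cint_w t0 (mu j) w
      (fun t => hpoly t0 psi (expi t) * zhalf t0 ((n j)%:Z - 2 * l%:Z) (expi t)) = 0) ->
  psi = 0.
Proof.
move=> w_meas w_bounded [c [[c_max c_orth] c_uniq]] psi_max psi_orth.
have : c + psi = c.
  apply: c_uniq; split; first by rewrite ffunE c_max psi_max addr0.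
  move=> j l lt_l; rewrite (cint_w_hpolyD t0 (mu j) w_meas w_bounded).
  by rewrite c_orth // psi_orth // addr0.
by rewrite -[RHS]addr0 => /addrI.
Qed.

Section HatWeight.
Variable R : realType.

Lemma measurable_hat_weight (phi1 phi2 : R) : measurable_fun setT (hat_weight phi1 phi2).
Proof.
have sin_meas (phi : R) : measurable_fun setT (fun t : R => sin ((t - phi) / 2)).
  apply: (measurableT_comp (continuous_measurable_fun (@continuous_sin R))).
  by apply: measurable_funM => //; apply: measurable_funB.
by apply: measurable_funM; first apply: measurable_funM.
Qed.

Lemma hat_weight_bounded (phi1 phi2 t : R) : `|hat_weight phi1 phi2 t| <= 4.
Proof.
have abs_sin_le1 (x : R) : `|sin x| <= 1 by rewrite ler_norml sin_le1 sin_geN1.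
rewrite /hat_weight !normrM -mulrA ger0_norm // ler_piMr //.
by rewrite -[1]mulr1 ler_pM.
Qed.

Lemma mul_subr_expi (t phi1 phi2 : R) :
  (expi t - expi phi1) * (expi t - expi phi2) =
  - (hat_weight phi1 phi2 t)%:C * expi t * expi ((phi1 + phi2) / 2).
Proof.
rewrite !subr_expi mulrACA.
have -> : (0 +i* (2 * sin ((t - phi1) / 2))) * (0 +i* (2 * sin ((t - phi2) / 2))) =
    - (hat_weight phi1 phi2 t)%:C.
  rewrite /hat_weight; apply/eqP; rewrite eq_complex /=.
  by apply/andP; split; apply/eqP; ring.
have -> : expi ((t + phi1) / 2) * expi ((t + phi2) / 2) =
    expi t * expi ((phi1 + phi2) / 2).
  by rewrite -!expiD; congr expi; lra.
by rewrite mulrC mulrA.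
Qed.

Lemma hpoly_zhalf_hat_weight (t0 : R) (K : nat) (d : {ffun 'I_K.+2 -> R[i]})
    (q : {poly R[i]}) (phi1 phi2 : R) (k : int) (t : R) :
  ffun_poly d = q * (('X - (expi phi1)%:P) * ('X - (expi phi2)%:P)) ->
  (size q <= K.+1)%N -> circ_arc t0 t ->
  hpoly t0 d (expi t) * zhalf t0 (k - 1) (expi t) =
  (hat_weight phi1 phi2 t)%:C *
    (hpoly t0 (poly_ffun K.+1 (- expi ((phi1 + phi2) / 2) *: q)) (expi t) *
     zhalf t0 k (expi t)).
Proof.
move=> dq size_q arc_t.
rewrite !hpoly_zhalf_arc // poly_ffunK; last exact: leq_trans (size_scale_leq _ _) size_q.
rewrite dq hornerZ !hornerM !hornerXsubC mul_subr_expi.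
have half_shift : expi (t / 2) ^ (k - 1 - K.+1%:Z) * expi t = expi (t / 2) ^ (k - K%:Z).
  rewrite -(expi_half_sqr t) exprnP -exprzDr ?expi_unit //.
  by congr (_ ^ _); lia.
by rewrite -half_shift; ring.
Qed.

End HatWeight.

Theorem theorem4p3 (R : realType) (t0 : R) (r : nat)
  (mu : 'I_r -> {finite_measure set R -> \bar R})
  (n : 'I_r -> nat) (tau : R[i]) (d : {ffun 'I_(nsize n).+2 -> R[i]})
  (phi1 phi2 : R) :
  (* each mu_j is a finite positive Borel measure on the circle
     (parametrized by theta in [t0, t0 + 2 pi)) with infinite support *)
  (forall j, mu j (~` circ_arc t0) = 0%E) ->
  (forall j, ~ finite_set (circ_support t0 (mu j))) ->
  phi_normal t0 mu (fun _ => 1) n ->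
  ComplexField.Normc.normc tau = 1 ->
  paraorthogonal t0 mu n tau d ->
  (exists z : R[i], z != 0 /\ hpoly t0 d z != 0) ->
  expi phi1 != expi phi2 ->
  zhalf t0 (nsize n).+1%:Z (expi phi1) * hpoly t0 d (expi phi1) = 0 ->
  zhalf t0 (nsize n).+1%:Z (expi phi2) * hpoly t0 d (expi phi2) = 0 ->
  ~ phi_normal t0 mu (hat_weight phi1 phi2) n.
Proof.
move=> _ _ _ _ [_ X_orth] [z [_ Xz_neq0]] neq_phi X1 X2 hat_normal.
have [q dq] :
    exists q, ffun_poly d = q * (('X - (expi phi1)%:P) * ('X - (expi phi2)%:P)).
  by apply: factor_two_roots neq_phi _ _; apply/rootP; rewrite -(zhalf_hpoly_expi t0).
have q_neq0 : q != 0.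
  apply: contra_neq Xz_neq0 => q0.
  by rewrite (@ffun_poly_eq0 _ _ d) ?hpoly0 // dq q0 mul0r.
have size_q : (size q <= nsize n)%N.
  by rewrite -2!ltnS -(size_mul_XsubC2 (expi phi1) (expi phi2) q_neq0) -dq size_poly.
set cc := expi ((phi1 + phi2) / 2).
have psi0 : poly_ffun (nsize n).+1 (- cc *: q) = 0.
  apply: (phi_normal_kernel (measurable_hat_weight phi1 phi2)
    (hat_weight_bounded phi1 phi2) hat_normal).
    by rewrite ffunE coefZ nth_default ?mulr0.
  move=> j l lt_l; rewrite -(X_orth j l lt_l); symmetry.
  apply: cint_w_weight => t arc_t.
  have -> : (n j)%:Z - 1 - 2 * l%:Z = ((n j)%:Z - 2 * l%:Z) - 1 by lia.
  exact: hpoly_zhalf_hat_weight dq (leqW size_q) arc_t.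
move/eqP: q_neq0; apply; apply/eqP.
move: (poly_ffun_eq0 (leq_trans (size_scale_leq (- cc) q) (leqW size_q)) psi0).
by move/eqP; rewrite scaler_eq0 oppr_eq0 (negbTE (expi_neq0 _)).
Qed.
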